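(* Let $n\ge2$, $\mathbf{a}\in\mathbb{C}^n$, $\beta>0$ and $f(\mathbf{z})=\frac12|\mathbf{a}^*\mathbf{z}|^2+\frac{\beta}{2}\|\mathbf{z}\|_4^4$ on $\mathbb{CS}^{n-1}$. Suppose that $\|\mathbf{a}\|_\infty>\frac12\|\mathbf{a}\|_1$ and that it is not the case that $\mathbf{a}$ has exactly one nonzero component with $\|\mathbf{a}\|_2^2\ge2\beta/(n-1)$. Then every consistent local minimizer of $f$ on $\mathbb{CS}^{n-1}$ is a global minimizer.
   Context: $\mathbb{CS}^{n-1}=\{\mathbf{z}\in\mathbb{C}^n:\|\mathbf{z}\|_2=1\}$. A stationary point $\mathbf{z}$ (i.e. $(\mathbf{a}^*\mathbf{z})\mathbf{a}+2\beta\,\mathrm{diag}(|z_1|^2,\dots,|z_n|^2)\mathbf{z}=2\lambda\mathbf{z}$ with $2\lambda=|\mathbf{a}^*\mathbf{z}|^2+2\beta\|\mathbf{z}\|_4^4$) is called consistent if $\bar a_kz_k\in\mathbb{R}$ for all $k$ with $a_k\neq0$ and $z_k\in\mathbb{R}$ for all $k$ with $a_k=0$. *)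

From HB Require Import structures.
From mathcomp Require Import all_boot all_order all_algebra.
From mathcomp Require Import all_classical all_reals.
From mathcomp Require Import complex.
Set Implicit Arguments. Unset Strict Implicit. Unset Printing Implicit Defensive.
Import Order.TTheory GRing.Theory Num.Theory.
Local Open Scope ring_scope.

Section Defs.
Variables (R : realType) (n : nat).
Local Notation C := R[i].

Definition cabs (x : C) : R := Normc.normc x.

Definition cdot (a z : 'I_n -> C) : C := \sum_(k < n) (a k)^* * z k.

Definition norm1 (a : 'I_n -> C) : R := \sum_(k < n) cabs (a k).
Definition norm2 (a : 'I_n -> C) : R := Num.sqrt (\sum_(k < n) cabs (a k) ^+ 2).
Definition norminf (a : 'I_n -> C) : R := \big[Num.max/0]_(k < n) cabs (a k).
Definition norm4_4 (z : 'I_n -> C) : R := \sum_(k < n) cabs (z k) ^+ 4.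

Definition csphere (z : 'I_n -> C) : Prop := norm2 z = 1.

Definition fobj (a : 'I_n -> C) (beta : R) (z : 'I_n -> C) : R :=
  2^-1 * cabs (cdot a z) ^+ 2 + beta / 2 * norm4_4 z.

Definition stationary (a : 'I_n -> C) (beta : R) (z : 'I_n -> C) : Prop :=
  let two_lambda : R := cabs (cdot a z) ^+ 2 + 2 * beta * norm4_4 z in
  forall k, cdot a z * a k + ((2 * beta * cabs (z k) ^+ 2)%:C)%C * z k
            = (two_lambda%:C)%C * z k.

Definition consistent (a : 'I_n -> C) (beta : R) (z : 'I_n -> C) : Prop :=
  stationary a beta z /\
  (forall k, a k != 0 -> Im ((a k)^* * z k) = 0) /\
  (forall k, a k = 0 -> Im (z k) = 0).

Definition local_minimizer_on_sphere (F : ('I_n -> C) -> R) (z : 'I_n -> C) : Prop :=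
  csphere z /\
  exists2 eps : R, 0 < eps &
    forall w, csphere w -> norm2 (fun k => w k - z k) < eps -> F z <= F w.

Definition global_minimizer_on_sphere (F : ('I_n -> C) -> R) (z : 'I_n -> C) : Prop :=
  csphere z /\ forall w, csphere w -> F z <= F w.

End Defs.

From HB Require Import structures.
From mathcomp Require Import all_boot all_order all_algebra.
From mathcomp Require Import all_classical all_reals.
From mathcomp Require Import complex ring lra.
Import Order.TTheory GRing.Theory Num.Theory.
Local Open Scope ring_scope.
Set Implicit Arguments. Unset Strict Implicit.

(* Let u_k := a_k / |a_k| (u_k := 1 when a_k = 0) and write w_k = u_k (x_k + i y_k).
   Consistency says exactly that z = (xi, 0) in these coordinates, and on real
   coordinates the objective becomes
     F(x, y) = 1/2 ((sum |a_k| x_k)^2 + (sum |a_k| y_k)^2) + beta/2 sum (x_k^2 + y_k^2)^2.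
   With lambda := 1/2 (sum |a_k| xi_k)^2 + beta sum xi_k^4 and
     Q(y) := 1/2 (sum |a_k| y_k)^2 + beta sum xi_k^2 y_k^2 - lambda sum y_k^2,
   every (x, y) on the unit sphere satisfies
     F(x, y) - F(xi, 0) - Q(x) - Q(y) = beta/2 sum (x_k^2 + y_k^2 - xi_k^2)^2 >= 0.
   Along the curve s |-> (xi, s y) / sqrt (1 + s^2 |y|^2) on the sphere, the increase
   of F is s^2 Q(y) + O(s^4), so Q >= 0 at a local minimizer, and the minimizer is
   global. *)

Section Phase.
Variable R : realType.
Implicit Types (a w : R[i]) (x y : R).

Definition phase a : R[i] := if a == 0 then 1 else a / (cabs a)%:C%C.
Definition aligned a x y : R[i] := phase a * (x +i* y)%C.
Definition alignedRe a w : R := complex.Re ((phase a)^* * w).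
Definition alignedIm a w : R := complex.Im ((phase a)^* * w).

Lemma cabs_ge0 a : 0 <= cabs a.
Proof. by case: a => p q; rewrite /cabs sqrtr_ge0. Qed.

Lemma cabs_eq0 a : (cabs a == 0) = (a == 0).
Proof. by apply/eqP/eqP => [/Normc.eq0_normc //|->]; exact: Normc.normc0. Qed.

Lemma cabs_real x : cabs x%:C%C = `|x|.
Proof. by rewrite /cabs /= expr0n addr0 sqrtr_sqr. Qed.

Lemma cabsM a w : cabs (a * w) = cabs a * cabs w.
Proof. exact: Normc.normcM. Qed.

Lemma cabsV a : cabs a^-1 = (cabs a)^-1.
Proof. exact: Normc.normcV. Qed.

Lemma cabs_sqr a : cabs a ^+ 2 = complex.Re a ^+ 2 + complex.Im a ^+ 2.
Proof. by case: a => p q; rewrite /cabs sqr_sqrtr // addr_ge0 ?sqr_ge0. Qed.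

Lemma conjC_mulr a : a^* * a = (cabs a ^+ 2)%:C%C.
Proof. by rewrite cabs_sqr; case: a => p q; simpc; congr (_ +i* _)%C; ring. Qed.

Lemma cabs_phase a : cabs (phase a) = 1.
Proof.
rewrite /phase; case: eqP => [_|/eqP a0]; first exact: Normc.normc1.
by rewrite cabsM cabsV cabs_real ger0_norm ?cabs_ge0 // divff // cabs_eq0.
Qed.

Lemma phase_conjC a : (phase a)^* * phase a = 1.
Proof. by rewrite conjC_mulr cabs_phase expr1n. Qed.

Lemma conjC_mul_phase a : a^* * phase a = (cabs a)%:C%C.
Proof.
rewrite /phase; case: eqP => [->|/eqP a0]; first by rewrite mulr1 conjC0 /cabs Normc.normc0.
rewrite mulrA conjC_mulr -fmorphV -rmorphM; congr (_%:C)%C.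
by rewrite expr2 mulfK // cabs_eq0.
Qed.

Lemma cabs_aligned a x y : cabs (aligned a x y) ^+ 2 = x ^+ 2 + y ^+ 2.
Proof. by rewrite cabsM cabs_phase mul1r cabs_sqr. Qed.

Lemma conjC_mul_aligned a x y :
  a^* * aligned a x y = ((cabs a * x) +i* (cabs a * y))%C.
Proof. by rewrite mulrA conjC_mul_phase; simpc. Qed.

Lemma alignedK a w : aligned a (alignedRe a w) (alignedIm a w) = w.
Proof.
rewrite /aligned /alignedRe /alignedIm.
have -> (u : R[i]) : (complex.Re u +i* complex.Im u)%C = u by case: u.
by rewrite mulrA [phase a * _]mulrC phase_conjC mul1r.
Qed.

Lemma real_Im_eq0 w : w \is Num.real -> complex.Im w = 0.
Proof. by case: w => p q; rewrite complex_real => /eqP. Qed.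

Lemma alignedIm_eq0 a w :
  (a != 0 -> Im (a^* * w) = 0) -> (a = 0 -> Im w = 0) -> alignedIm a w = 0.
Proof.
move=> aw_real w_real; apply: real_Im_eq0; rewrite /phase.
case: eqP => [a0|/eqP a0]; first by rewrite conjC1 mul1r; apply/Creal_ImP/w_real.
rewrite rmorphM fmorphV mulrAC rpredM //; first by apply/Creal_ImP/aw_real.
by rewrite rpredV; apply/complex_realP; exists (cabs a); exact: conjc_real.
Qed.

Lemma aligned_sub a x y x' y' :
  aligned a x y - aligned a x' y' = aligned a (x - x') (y - y').
Proof. by rewrite /aligned -mulrBr; simpc. Qed.

Lemma sum_complex n (F G : 'I_n -> R) :
  \sum_(k < n) (F k +i* G k)%C = ((\sum_(k < n) F k) +i* (\sum_(k < n) G k))%C.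
Proof. by elim/big_rec3: _ => [//|k u v w _ ->]; simpc. Qed.

End Phase.

Lemma exists_small_step (R : realFieldType) (q K delta : R) : q < 0 -> 0 < delta ->
  exists2 t, 0 < t < delta & q + t * K < 0.
Proof.
move=> q_lt0 delta_gt0.
have K1_gt0 : 0 < `|K| + 1 by rewrite ltr_wpDl.
set m := Num.min delta (- q / (`|K| + 1)).
have m_gt0 : 0 < m by rewrite lt_min delta_gt0 divr_gt0 // oppr_gt0.
have [m_le_delta m_le_q] : m <= delta /\ m * (`|K| + 1) <= - q.
  by rewrite -ler_pdivlMr // ge_min lexx ge_min lexx orbT.
exists (m / 2); first by apply/andP; split; lra.
have : m / 2 * K <= m / 2 * `|K| by rewrite ler_pM2l ?ler_norm // divr_gt0.
nra.
Qed.

Section RealProblem.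
Variables (R : rcfType) (n : nat) (al xi : 'I_n -> R) (beta : R).
Implicit Types (x y : 'I_n -> R) (c s r : R).

Definition wsum x : R := \sum_(k < n) al k * x k.
Definition sumsq x : R := \sum_(k < n) x k ^+ 2.

Definition freal x y : R :=
  2^-1 * (wsum x ^+ 2 + wsum y ^+ 2)
  + beta / 2 * \sum_(k < n) (x k ^+ 2 + y k ^+ 2) ^+ 2.

Definition lagrange : R := 2^-1 * wsum xi ^+ 2 + beta * \sum_(k < n) xi k ^+ 4.

Definition qform y : R :=
  2^-1 * wsum y ^+ 2 + beta * \sum_(k < n) xi k ^+ 2 * y k ^+ 2
  - lagrange * sumsq y.

Lemma wsumZ c x : wsum (fun k => c * x k) = c * wsum x.
Proof. by rewrite /wsum mulr_sumr; apply: eq_bigr => k _; rewrite mulrCA. Qed.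

Lemma sumsqZ c x : sumsq (fun k => c * x k) = c ^+ 2 * sumsq x.
Proof. by rewrite /sumsq mulr_sumr; apply: eq_bigr => k _; rewrite exprMn. Qed.

Lemma sumsq_ge0 x : 0 <= sumsq x.
Proof. by apply: sumr_ge0 => k _; rewrite sqr_ge0. Qed.

Lemma sumsq0 : sumsq (fun=> 0) = 0.
Proof. by rewrite /sumsq big1 // => k _; rewrite expr0n. Qed.

Lemma freal_center :
  freal xi (fun=> 0) = 2^-1 * wsum xi ^+ 2 + beta / 2 * \sum_(k < n) xi k ^+ 4.
Proof.
rewrite /freal; have -> : wsum (fun=> 0) = 0 by rewrite /wsum big1 // => k _; rewrite mulr0.
congr (_ * _ + _ * _); first by rewrite expr0n addr0.
by apply: eq_bigr => k _; rewrite expr0n addr0 -exprM.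
Qed.

Lemma freal_sub_qform x y : sumsq x + sumsq y = 1 ->
  freal x y - (freal xi (fun=> 0) + qform x + qform y)
  = beta / 2 * \sum_(k < n) (x k ^+ 2 + y k ^+ 2 - xi k ^+ 2) ^+ 2.
Proof.
move=> sphere.
have -> : \sum_(k < n) (x k ^+ 2 + y k ^+ 2 - xi k ^+ 2) ^+ 2
    = \sum_(k < n) (x k ^+ 2 + y k ^+ 2) ^+ 2
      - 2 * (\sum_(k < n) xi k ^+ 2 * x k ^+ 2 + \sum_(k < n) xi k ^+ 2 * y k ^+ 2)
      + \sum_(k < n) xi k ^+ 4.
  rewrite -big_split mulr_sumr -sumrN -!big_split /=.
  by apply: eq_bigr => k _; ring.
rewrite freal_center /freal /qform /lagrange.
transitivity (beta / 2 * (\sum_(k < n) (x k ^+ 2 + y k ^+ 2) ^+ 2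
    - 2 * (\sum_(k < n) xi k ^+ 2 * x k ^+ 2 + \sum_(k < n) xi k ^+ 2 * y k ^+ 2)
    + \sum_(k < n) xi k ^+ 4)
  + (2^-1 * wsum xi ^+ 2 + beta * \sum_(k < n) xi k ^+ 4) * (sumsq x + sumsq y - 1));
  last by rewrite sphere subrr mulr0 addr0.
by field.
Qed.

Lemma freal_ge_qform x y : 0 <= beta -> sumsq x + sumsq y = 1 ->
  freal xi (fun=> 0) + qform x + qform y <= freal x y.
Proof.
move=> beta_ge0 sphere; rewrite -subr_ge0 freal_sub_qform //.
by rewrite mulr_ge0 ?divr_ge0 // sumr_ge0 // => k _; rewrite sqr_ge0.
Qed.

Lemma freal_perturb y0 : exists K, forall s r, r ^+ 2 * (1 + s ^+ 2 * sumsq y0) = 1 ->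
  freal (fun k => r * xi k) (fun k => s * r * y0 k) - freal xi (fun=> 0)
  = r ^+ 4 * s ^+ 2 * (qform y0 + s ^+ 2 * K).
Proof.
set D := sumsq y0; set S4 := \sum_(k < n) xi k ^+ 4.
set S22 := \sum_(k < n) xi k ^+ 2 * y0 k ^+ 2; set Y4 := \sum_(k < n) y0 k ^+ 4.
set f0 := 2^-1 * wsum xi ^+ 2 + beta / 2 * S4.
exists (2^-1 * wsum y0 ^+ 2 * D + beta / 2 * Y4 - f0 * D ^+ 2) => s r normalized.
have quartic : \sum_(k < n) ((r * xi k) ^+ 2 + (s * r * y0 k) ^+ 2) ^+ 2
    = r ^+ 4 * (S4 + 2 * s ^+ 2 * S22 + s ^+ 4 * Y4).
  rewrite /S4 /S22 /Y4 !mulr_sumr -!big_split mulr_sumr /=.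
  by apply: eq_bigr => k _; ring.
rewrite freal_center -/S4 -/f0 /freal wsumZ (wsumZ (s * r)) quartic.
(* The normalization makes every term homogeneous of degree 4 in r. *)
transitivity (2^-1 * r ^+ 2 * (wsum xi ^+ 2 + s ^+ 2 * wsum y0 ^+ 2) * (r ^+ 2 * (1 + s ^+ 2 * D))
  + beta / 2 * r ^+ 4 * (S4 + 2 * s ^+ 2 * S22 + s ^+ 4 * Y4)
  - f0 * (r ^+ 2 * (1 + s ^+ 2 * D)) ^+ 2).
  by rewrite normalized expr1n !mulr1; ring.
by rewrite /qform /lagrange -/D -/S4 -/S22 /f0; field.
Qed.

Lemma perturb_on_sphere s r y0 : sumsq xi = 1 ->
  r ^+ 2 * (1 + s ^+ 2 * sumsq y0) = 1 ->
  sumsq (fun k => r * xi k) + sumsq (fun k => s * r * y0 k) = 1.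
Proof. by move=> xi_unit normalized; rewrite !sumsqZ xi_unit -[RHS]normalized; ring. Qed.

Lemma perturb_dist s r y0 : sumsq xi = 1 -> 0 < r ->
  r ^+ 2 * (1 + s ^+ 2 * sumsq y0) = 1 ->
  sumsq (fun k => r * xi k - xi k) + sumsq (fun k => s * r * y0 k)
  <= 2 * (s ^+ 2 * sumsq y0).
Proof.
move=> xi_unit r_gt0 normalized.
have -> : sumsq (fun k => r * xi k - xi k) = sumsq (fun k => (r - 1) * xi k).
  by apply: eq_bigr => k _; rewrite mulrBl mul1r.
rewrite !sumsqZ xi_unit mulr1.
have t_ge0 : 0 <= s ^+ 2 * sumsq y0 by rewrite mulr_ge0 ?sqr_ge0 ?sumsq_ge0.
move: normalized t_ge0; set t := s ^+ 2 * sumsq y0 => normalized t_ge0.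
have -> : (s * r) ^+ 2 * sumsq y0 = r ^+ 2 * t by rewrite /t; ring.
nra.
Qed.

Lemma qform_ge0_of_local_min eps : sumsq xi = 1 -> 0 < eps ->
  (forall x y, sumsq x + sumsq y = 1 ->
     sumsq (fun k => x k - xi k) + sumsq y < eps ->
     freal xi (fun=> 0) <= freal x y) ->
  forall y0, 0 <= qform y0.
Proof.
move=> xi_unit eps_gt0 local_min y0; rewrite leNgt; apply/negP => q_lt0.
have [K perturb] := freal_perturb y0.
have D_ge0 := sumsq_ge0 y0; set D := sumsq y0 in perturb D_ge0 *.
have D1_gt0 : 0 < 2 * D + 1 by lra.
have [t /andP[t_gt0 t_small] descent] := exists_small_step K q_lt0 (divr_gt0 eps_gt0 D1_gt0).
have M_gt0 : 0 < 1 + t * D by rewrite ltr_pwDl // mulr_ge0 // ltW.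
pose s := Num.sqrt t; pose r := (Num.sqrt (1 + t * D))^-1.
have s2 : s ^+ 2 = t by rewrite sqr_sqrtr // ltW.
have r_gt0 : 0 < r by rewrite invr_gt0 sqrtr_gt0.
have normalized : r ^+ 2 * (1 + s ^+ 2 * D) = 1.
  by rewrite s2 exprVn sqr_sqrtr ?ltW // mulVf // gt_eqF.
have close : sumsq (fun k => r * xi k - xi k) + sumsq (fun k => s * r * y0 k) < eps.
  apply: le_lt_trans (perturb_dist xi_unit r_gt0 normalized) _.
  by rewrite s2 -/D; move: t_small; rewrite ltr_pdivlMr //; lra.
have := local_min _ _ (perturb_on_sphere xi_unit normalized) close.
rewrite -subr_ge0 perturb // s2 pmulr_rge0 ?mulr_gt0 ?exprn_gt0 //.
by rewrite leNgt descent.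
Qed.

Lemma freal_local_min_global eps : 0 <= beta -> sumsq xi = 1 -> 0 < eps ->
  (forall x y, sumsq x + sumsq y = 1 ->
     sumsq (fun k => x k - xi k) + sumsq y < eps ->
     freal xi (fun=> 0) <= freal x y) ->
  forall x y, sumsq x + sumsq y = 1 -> freal xi (fun=> 0) <= freal x y.
Proof.
move=> beta_ge0 xi_unit eps_gt0 local_min x y sphere.
have q_ge0 := qform_ge0_of_local_min xi_unit eps_gt0 local_min.
apply: le_trans (freal_ge_qform beta_ge0 sphere).
by rewrite -addrA lerDl addr_ge0.
Qed.

End RealProblem.

Section Lift.
Variables (R : realType) (n : nat) (a : 'I_n -> R[i]) (beta : R).
Implicit Types (x y xi : 'I_n -> R) (w : 'I_n -> R[i]).

Local Notation moduli := (fun k => cabs (a k)).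

Definition lift x y : 'I_n -> R[i] := fun k => aligned (a k) (x k) (y k).
Definition liftRe w : 'I_n -> R := fun k => alignedRe (a k) (w k).
Definition liftIm w : 'I_n -> R := fun k => alignedIm (a k) (w k).

Lemma liftK w : lift (liftRe w) (liftIm w) = w.
Proof. by apply/funext => k; exact: alignedK. Qed.

Lemma lift_sub x y x' y' : (fun k => lift x y k - lift x' y' k)
  = lift (fun k => x k - x' k) (fun k => y k - y' k).
Proof. by apply/funext => k; exact: aligned_sub. Qed.

Lemma norm2_lift x y : norm2 (lift x y) = Num.sqrt (sumsq x + sumsq y).
Proof.
by rewrite /norm2 /sumsq -big_split; congr Num.sqrt; apply: eq_bigr => k _; exact: cabs_aligned.
Qed.

Lemma csphere_lift x y : csphere (lift x y) <-> sumsq x + sumsq y = 1.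
Proof.
rewrite /csphere norm2_lift; split=> [sqrt1|->]; last exact: sqrtr1.
by apply/eqP; rewrite -eqr_sqrt ?addr_ge0 ?sumsq_ge0 // sqrt1 sqrtr1.
Qed.

Lemma cdot_lift x y : cdot a (lift x y) = (wsum moduli x +i* wsum moduli y)%C.
Proof. by rewrite /cdot -sum_complex; apply: eq_bigr => k _; exact: conjC_mul_aligned. Qed.

Lemma fobj_lift x y : fobj a beta (lift x y) = freal moduli beta x y.
Proof.
rewrite /fobj cdot_lift cabs_sqr /norm4_4; congr (_ + _ * _).
by apply: eq_bigr => k _; rewrite (exprM _ 2 2) cabs_aligned.
Qed.

Lemma consistent_lift z : consistent a beta z -> z = lift (liftRe z) (fun=> 0).
Proof.
move=> [_ [aligned_real zero_real]]; rewrite -{1}(liftK z); congr lift.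
by apply/funext => k; apply: alignedIm_eq0; [exact: aligned_real | exact: zero_real].
Qed.

Lemma local_min_lift xi :
  local_minimizer_on_sphere (fobj a beta) (lift xi (fun=> 0)) ->
  exists2 eps, 0 < eps & forall x y, sumsq x + sumsq y = 1 ->
    sumsq (fun k => x k - xi k) + sumsq y < eps ->
    freal moduli beta xi (fun=> 0) <= freal moduli beta x y.
Proof.
move=> [_ [eps eps_gt0 local_min]]; exists (eps ^+ 2) => [|x y sphere close].
  by rewrite exprn_gt0.
rewrite -!fobj_lift; apply: local_min; first exact/csphere_lift.
rewrite lift_sub norm2_lift -(ger0_norm (ltW eps_gt0)) -sqrtr_sqr ltr_sqrt ?exprn_gt0 //.
by under [sumsq (fun k => y k - 0)]eq_bigr do rewrite subr0.
Qed.

End Lift.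

Theorem theorem11 (R : realType) (n : nat) (a : 'I_n -> R[i]) (beta : R) :
  (2 <= n)%N -> 0 < beta ->
  norminf a > 2^-1 * norm1 a ->
  ~ (#|[pred k | a k != 0]| = 1%N /\ norm2 a ^+ 2 >= 2 * beta / (n - 1)%:R) ->
  forall z : 'I_n -> R[i],
    consistent a beta z -> local_minimizer_on_sphere (fobj a beta) z ->
    global_minimizer_on_sphere (fobj a beta) z.
Proof.
move=> _ beta_gt0 _ _ z /consistent_lift z_lift.
set xi := liftRe a z in z_lift; rewrite z_lift => z_min.
have [eps eps_gt0 local_min] := local_min_lift z_min.
have xi_unit : sumsq xi = 1.
  by case: z_min => /csphere_lift; rewrite sumsq0 addr0.
split=> [|w]; first by apply/csphere_lift; rewrite sumsq0 addr0.
rewrite -(liftK a w) => /csphere_lift w_sphere; rewrite !fobj_lift.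
exact: freal_local_min_global (ltW beta_gt0) xi_unit eps_gt0 local_min _ _ w_sphere.
Qed.
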